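(* Let $S \subseteq \mathbb{R}^r$ be a linear subspace, $0 \le d \le r$, and $C = C(S,d)$ the associated s-cone. For a nonzero vector $x \in C$, the following are equivalent: (i) $x$ is support-minimal; (ii) $x$ is support-wise non-decomposable; (iii) $x$ is conformally non-decomposable.
   Context: For $x \in \mathbb{R}^n$, $\operatorname{supp}(x) = \{ i \mid x_i \neq 0\}$, and $\operatorname{sign}(x) \in \{-,0,+\}^n$ is obtained by applying the sign function componentwise; the relations $0<-$, $0<+$ induce a componentwise partial order on $\{-,0,+\}^n$. For a linear subspace $S \subseteq \mathbb{R}^r$ and $0 \le d \le r$, the s-cone is $C(S,d) = \{ (x,y) \in \mathbb{R}^{(r-d)+d} \mid (x,y) \in S,\ y \ge 0\}$. For a convex cone $C$ and nonzero $x \in C$: $x$ is support-minimal if for all nonzero $x' \in C$, $\operatorname{supp}(x') \subseteq \operatorname{supp}(x)$ implies $\operatorname{supp}(x') = \operatorname{supp}(x)$; $x$ is support-wise non-decomposable if for all nonzero $x^1,x^2 \in C$ with $\operatorname{supp}(x^1),\operatorname{supp}(x^2) \subseteq \operatorname{supp}(x)$, $x = x^1 + x^2$ implies $\operatorname{supp}(x^1) = \operatorname{supp}(x^2)$; $x$ is conformally non-decomposable if for all nonzero $x^1,x^2 \in C$ with $\operatorname{sign}(x^1),\operatorname{sign}(x^2) \le \operatorname{sign}(x)$, $x = x^1 + x^2$ implies $x^1 = \lambda x^2$ for some $\lambda > 0$. *)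

From mathcomp Require Import all_boot all_order all_algebra.
From mathcomp Require Import reals.
Set Implicit Arguments. Unset Strict Implicit. Unset Printing Implicit Defensive.
Import Order.TTheory GRing.Theory Num.Theory.
Local Open Scope ring_scope.

Section Defs.
Variables (R : realType) (r : nat).

Definition supp (x : 'rV[R]_r) : {set 'I_r} := [set i | x 0 i != 0].

(* sign(x) in {-,0,+}^r, encoded by Num.sg in {-1,0,1} *)
Definition signv (x : 'rV[R]_r) : 'I_r -> R := fun i => Num.sg (x 0 i).

(* componentwise partial order on {-,0,+}^r induced by 0 < -, 0 < + *)
Definition sign_le (s t : 'I_r -> R) : Prop :=
  forall i, s i = 0 \/ s i = t i.

(* s-cone C(S,d): (x,y) in S with y >= 0, where y is the block of the last
   d coordinates, i.e. indices i with r - d <= i. *)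
Definition scone (S : {vspace 'rV[R]_r}) (d : nat) (x : 'rV[R]_r) : Prop :=
  x \in S /\ forall i : 'I_r, (r - d <= i)%N -> 0 <= x 0 i.

Definition support_minimal (C : 'rV[R]_r -> Prop) (x : 'rV[R]_r) : Prop :=
  forall x', C x' -> x' != 0 -> supp x' \subset supp x -> supp x' = supp x.

Definition supportwise_nondecomposable (C : 'rV[R]_r -> Prop) (x : 'rV[R]_r)
  : Prop :=
  forall x1 x2, C x1 -> C x2 -> x1 != 0 -> x2 != 0 ->
    supp x1 \subset supp x -> supp x2 \subset supp x ->
    x = x1 + x2 -> supp x1 = supp x2.

Definition conformally_nondecomposable (C : 'rV[R]_r -> Prop) (x : 'rV[R]_r)
  : Prop :=
  forall x1 x2, C x1 -> C x2 -> x1 != 0 -> x2 != 0 ->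
    sign_le (signv x1) (signv x) -> sign_le (signv x2) (signv x) ->
    x = x1 + x2 -> exists2 lambda : R, 0 < lambda & x1 = lambda *: x2.

End Defs.

(** If [x] is support-minimal, every nonzero conformal summand of [x] has the
    support of [x], which gives (ii); and if [x = x1 + x2] conformally, then
    [x1 - t x2], for the largest [t] keeping it conformal to [x1] (a ratio
    test), lies in the cone and vanishes at some coordinate of [supp x], so it
    is [0], i.e. [x1 = t x2].  Conversely, if [x'] in the cone has support
    strictly inside [supp x], the ratio test applied to [x] and [+-x'] gives a
    conformal [y0] vanishing at some [j] of [supp x], and a second ratio test
    splits [x = (x - s y0) + s y0] into two conformal elements of the cone that
    differ at [j], violating (ii) and (iii).  Throughout, a vector of [S]
    conformal to an element of the cone is in the cone, since it inherits the
    sign constraints. *)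
From mathcomp Require Import all_boot all_order all_algebra.
From mathcomp Require Import reals ring lra.
Set Implicit Arguments. Unset Strict Implicit. Unset Printing Implicit Defensive.
Import Order.TTheory GRing.Theory Num.Theory.
Local Open Scope ring_scope.

Lemma sgr_eq_mul_gt0 (R : realDomainType) (a b : R) :
  0 < a * b -> Num.sg a = Num.sg b.
Proof. by rewrite -sgr_cp0 sgrM mulr_sg_eq1 => /andP[_ /eqP]. Qed.

Lemma mul_gt0_sgr_eq (R : realDomainType) (a b : R) :
  b != 0 -> Num.sg a = Num.sg b -> 0 < a * b.
Proof. by move=> b0 eq_sg; rewrite -sgr_cp0 sgrM eq_sg mulr_sg_eq1 b0 /=. Qed.

Section Conformal.
Variables (R : realType) (r : nat).
Implicit Types (x y z : 'rV[R]_r).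

Definition conformal y x := sign_le (signv y) (signv x).

Lemma conformal_trans x y z : conformal z y -> conformal y x -> conformal z x.
Proof.
move=> zy yx i; case: (zy i) => [|->]; first by left.
by case: (yx i) => [|->]; [left|right].
Qed.

Lemma conformal_eq0 x y i : conformal y x -> x 0 i = 0 -> y 0 i = 0.
Proof.
move=> yx xi0; apply/eqP; rewrite -sgr_eq0; apply/eqP.
by case: (yx i); rewrite /signv // xi0 sgr0.
Qed.

Lemma conformal_supp x y : conformal y x -> supp y \subset supp x.
Proof.
move=> yx; apply/subsetP => i; rewrite !inE.
by apply: contra => /eqP /(conformal_eq0 yx) ->.
Qed.

Lemma conformal_sgr x y i : conformal y x -> y 0 i != 0 ->
  Num.sg (y 0 i) = Num.sg (x 0 i).
Proof. by move=> yx yi0; case: (yx i) => // /eqP; rewrite sgr_eq0 (negbTE yi0). Qed.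

Lemma conformal_supp_sym x y : conformal y x -> supp x \subset supp y ->
  conformal x y.
Proof.
move=> yx /subsetP supp_sub i; case: (yx i) => [|<-]; last by right.
rewrite /signv => /eqP; rewrite sgr_eq0 => /eqP yi0; left.
apply/eqP; rewrite sgr_eq0; apply/eqP; have := contra (supp_sub i).
by rewrite !inE !negbK yi0 eqxx => /(_ isT) /eqP.
Qed.

Lemma conformalZ (s : R) x y : 0 < s -> conformal y x -> conformal (s *: y) x.
Proof. by move=> s_gt0 yx i; rewrite /signv mxE sgrM gtr0_sg // mul1r; apply: yx. Qed.

Lemma conformal_mul_ge0 x y :
  (forall i, x 0 i = 0 -> y 0 i = 0) -> (forall i, 0 <= x 0 i * y 0 i) ->
  conformal y x.
Proof.
move=> xy0 xy_ge0 i; have [yi0|yi0] := eqVneq (y 0 i) 0.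
  by left; rewrite /signv yi0 sgr0.
have [xi0|xi0] := eqVneq (x 0 i) 0; first by move: yi0; rewrite xy0 ?eqxx.
right; apply/esym/sgr_eq_mul_gt0.
by rewrite lt_def mulf_neq0 ?xy_ge0.
Qed.

Lemma supp_eq0 x : (supp x == set0) = (x == 0).
Proof.
apply/eqP/eqP => [/setP supp0|->]; last by apply/setP => i; rewrite !inE mxE eqxx.
by apply/rowP => i; move: (supp0 i); rewrite !inE mxE => /negbFE/eqP.
Qed.

Lemma conformal_mul_gt0 x y : y != 0 -> conformal y x ->
  exists i, 0 < x 0 i * y 0 i.
Proof.
rewrite -supp_eq0 => /set0Pn[i]; rewrite inE => yi0 yx.
by exists i; apply: mul_gt0_sgr_eq => //; rewrite (conformal_sgr yx).
Qed.

(* The ratio test: [t] is the least ratio [x_i / y_i] over the coordinates where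
   [x] and [y] agree in sign. *)
Lemma conformal_cancellation x y :
  (forall i, x 0 i = 0 -> y 0 i = 0) -> (exists i, 0 < x 0 i * y 0 i) ->
  exists2 t : R, 0 < t &
    conformal (x - t *: y) x /\ exists2 j, x 0 j != 0 & (x - t *: y) 0 j = 0.
Proof.
move=> xy0 [i0 agree_i0].
pose agree := [pred i | 0 < x 0 i * y 0 i].
have [j agree_j t_min] := @arg_minP _ _ _ i0 agree (fun i => x 0 i / y 0 i) agree_i0.
have xj0 : x 0 j != 0.
  by apply: contraTneq agree_j; rewrite inE => ->; rewrite mul0r ltxx.
have yj0 : y 0 j != 0.
  by apply: contraTneq agree_j; rewrite inE => ->; rewrite mulr0 ltxx.
set t := x 0 j / y 0 j.
have t_gt0 : 0 < t.
  have -> : t = x 0 j * y 0 j / y 0 j ^+ 2 by rewrite /t; field.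
  by rewrite divr_gt0 // exprn_even_gt0.
exists t => //; split; last by exists j => //; rewrite !mxE /t; field.
apply: conformal_mul_ge0 => [i xi0|i]; first by rewrite !mxE xi0 xy0 // mulr0 subr0.
rewrite !mxE; have [agree_i|] := boolP (agree i); last first.
  by rewrite inE -leNgt => xy_le0; nra.
have yi0 : y 0 i != 0.
  by apply: contraTneq agree_i; rewrite inE => ->; rewrite mulr0 ltxx.
have := ler_wpM2r (ltW agree_i) (t_min i agree_i).
have -> : x 0 i / y 0 i * (x 0 i * y 0 i) = x 0 i * x 0 i by field.
by rewrite -/t => t_le; nra.
Qed.

End Conformal.

Lemma supportwise_nondecomposable_of_support_minimal
    (R : realType) (r : nat) (C : 'rV[R]_r -> Prop) (x : 'rV[R]_r) :
  support_minimal C x -> supportwise_nondecomposable C x.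
Proof.
move=> min_x x1 x2 Cx1 Cx2 x10 x20 supp1 supp2 _.
by rewrite (min_x x1 Cx1 x10 supp1) (min_x x2 Cx2 x20 supp2).
Qed.

Section SCone.
Variables (R : realType) (r d : nat) (S : {vspace 'rV[R]_r}).
Implicit Types (x y : 'rV[R]_r).

Lemma scone_conformal x y : scone S d x -> y \in S -> conformal y x ->
  scone S d y.
Proof.
move=> [_ x_ge0] yS yx; split => // i di.
case: (yx i) => /eqP; rewrite /signv; first by rewrite sgr_eq0 => /eqP ->.
by rewrite -sgr_ge0 => /eqP ->; rewrite sgr_ge0 x_ge0.
Qed.

Lemma scone_split_of_proper_supp x x' :
  scone S d x -> scone S d x' -> x' != 0 -> supp x' \proper supp x ->
  exists y z, exists j : 'I_r,
    [/\ x = z + y, scone S d y, scone S d z, conformal y x & conformal z x] /\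
    [/\ y != 0, z != 0, y 0 j = 0 & z 0 j != 0].
Proof.
move=> [xS x_ge0] [x'S _] x'0 /properP[/subsetP supp_sub [k]].
rewrite !inE negbK => xk0 /eqP x'k0.
have xx'0 i : x 0 i = 0 -> x' 0 i = 0.
  move=> xi0; apply/eqP; have := contra (supp_sub i).
  by rewrite !inE !negbK xi0 eqxx; apply.
have [i0] : exists i0, x' 0 i0 != 0.
  by move: x'0; rewrite -supp_eq0 => /set0Pn[i0]; rewrite inE; exists i0.
move=> x'i0; set x'' := Num.sg (x 0 i0 * x' 0 i0) *: x'.
have x''S : x'' \in S by rewrite memvZ.
have xx''0 i : x 0 i = 0 -> x'' 0 i = 0 by move=> /xx'0 x'i0'; rewrite mxE x'i0' mulr0.
have agree_i0 : 0 < x 0 i0 * x'' 0 i0.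
  rewrite mxE mulrCA -normrEsg normr_gt0 mulf_neq0 //.
  by apply: contra_neq x'i0 => /xx'0.
have [t t_gt0 [y0x [j xj0 y0j0]]] :=
  conformal_cancellation xx''0 (ex_intro _ i0 agree_i0).
set y0 := x - t *: x'' in y0x y0j0.
have y00 : y0 != 0.
  have y0k : y0 0 k = x 0 k by rewrite !mxE x'k0 !mulr0 subr0.
  by apply: contra_neq xk0 => y0_eq0; rewrite -y0k y0_eq0 mxE.
have y0S : y0 \in S by rewrite memvB ?memvZ.
clearbody y0.
have [s s_gt0 [zx _]] :=
  conformal_cancellation (fun i => conformal_eq0 y0x) (conformal_mul_gt0 y00 y0x).
exists (s *: y0), (x - s *: y0), j; split; first split.
- by rewrite subrK.
- by apply: (scone_conformal (conj xS x_ge0)); rewrite ?memvZ //; apply: conformalZ.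
- by apply: (scone_conformal (conj xS x_ge0)); rewrite ?memvB ?memvZ.
- exact: conformalZ.
- by [].
have zj0 : (x - s *: y0) 0 j != 0 by rewrite !mxE y0j0 mulr0 subr0.
split=> //; first by rewrite scaler_eq0 negb_or y00 gt_eqF.
- by apply: contraNneq zj0 => ->; rewrite mxE.
- by rewrite mxE y0j0 mulr0.
Qed.

Lemma support_minimal_of_supportwise_nondecomposable x : scone S d x ->
  supportwise_nondecomposable (scone S d) x -> support_minimal (scone S d) x.
Proof.
move=> Cx ndx x' Cx' x'0 supp_sub; apply/eqP; apply: contraT => supp_neq.
have := scone_split_of_proper_supp Cx Cx' x'0; rewrite properEneq supp_neq supp_sub.
move=> /(_ isT) [y [z [j [[x_eq Cy Cz yx zx] [y0 z0 yj0 zj0]]]]].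
have := ndx z y Cz Cy z0 y0 (conformal_supp zx) (conformal_supp yx) x_eq.
by move/setP/(_ j); rewrite !inE zj0 yj0 eqxx.
Qed.

Lemma support_minimal_of_conformally_nondecomposable x : scone S d x ->
  conformally_nondecomposable (scone S d) x -> support_minimal (scone S d) x.
Proof.
move=> Cx ndx x' Cx' x'0 supp_sub; apply/eqP; apply: contraT => supp_neq.
have := scone_split_of_proper_supp Cx Cx' x'0; rewrite properEneq supp_neq supp_sub.
move=> /(_ isT) [y [z [j [[x_eq Cy Cz yx zx] [y0 z0 yj0 zj0]]]]].
have [l _ z_eq] := ndx z y Cz Cy z0 y0 zx yx x_eq.
by move: zj0; rewrite z_eq mxE yj0 mulr0 eqxx.
Qed.

Lemma conformally_nondecomposable_of_support_minimal x : scone S d x ->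
  support_minimal (scone S d) x -> conformally_nondecomposable (scone S d) x.
Proof.
move=> Cx min_x x1 x2 Cx1 Cx2 x10 x20 x1x x2x _.
have x_x1 : conformal x x1.
  by apply: (conformal_supp_sym x1x); rewrite (min_x x1 Cx1 x10 (conformal_supp x1x)).
have x2x1 := conformal_trans x2x x_x1.
have [t t_gt0 [yx1 [j x1j0 yj0]]] :=
  conformal_cancellation (fun i => conformal_eq0 x2x1) (conformal_mul_gt0 x20 x2x1).
have [y_eq0|y0] := eqVneq (x1 - t *: x2) 0.
  by exists t => //; apply/eqP; rewrite -subr_eq0 y_eq0.
have yx := conformal_trans yx1 x1x.
have Cy : scone S d (x1 - t *: x2).
  case: Cx1 Cx2 => [x1S _] [x2S _].
  by apply: (scone_conformal Cx _ yx); rewrite memvB ?memvZ.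
have := min_x _ Cy y0 (conformal_supp yx); move/setP/(_ j).
have xj0 : j \in supp x by apply: (subsetP (conformal_supp x1x)); rewrite inE.
by move: xj0; rewrite !inE yj0 eqxx => ->.
Qed.

End SCone.

Theorem proposition2 (R : realType) (r d : nat) (hd : (d <= r)%N)
  (S : {vspace 'rV[R]_r}) (x : 'rV[R]_r) :
  scone S d x -> x != 0 ->
  (support_minimal (scone S d) x <-> supportwise_nondecomposable (scone S d) x)
  /\ (supportwise_nondecomposable (scone S d) x <->
      conformally_nondecomposable (scone S d) x).
Proof.
move=> Cx _; split; split.
- exact: supportwise_nondecomposable_of_support_minimal.
- exact: support_minimal_of_supportwise_nondecomposable.
- by move=> /(support_minimal_of_supportwise_nondecomposable Cx)
            /(conformally_nondecomposable_of_support_minimal Cx).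
- by move=> /(support_minimal_of_conformally_nondecomposable Cx)
            /supportwise_nondecomposable_of_support_minimal.
Qed.
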